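(* For each $\gamma\in\mathbb{R}$ let $\hat g_{+,\gamma}$ be any minimizer of $\hat h_{+,\gamma}$ over $\mathcal{F}$, and let $\epsilon_{\text{abs}}>0$. Then: (1) $\hat h_{+,\gamma}(\hat g_{+,\gamma})$ is monotonically increasing in $\gamma$; (2) $\hat e_{\text{orig}}(\hat g_{+,\gamma})$ is monotonically decreasing in $\gamma$ for $\gamma\le0$, and if $\epsilon_{\text{abs}}\ge\min_{f\in\mathcal{F}}\hat e_{\text{orig}}(f)$ then $\hat h_{+,0}(\hat g_{+,0})\ge0$ and $\hat e_{\text{orig}}(\hat g_{+,0})\le\epsilon_{\text{abs}}$; (3) the quantity $\left\{\frac{\hat h_{+,\gamma}(\hat g_{+,\gamma})}{\epsilon_{\text{abs}}}-1\right\}\gamma^{-1}$ is monotonically increasing in $\gamma$ over the range where $\hat e_{\text{orig}}(\hat g_{+,\gamma})\le\epsilon_{\text{abs}}$ and $\gamma<0$, and monotonically decreasing in $\gamma$ over the range where $\hat e_{\text{orig}}(\hat g_{+,\gamma})>\epsilon_{\text{abs}}$ and $\gamma<0$.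
   Context: Setting: $\mathcal{F}$ a set of prediction models, $L\ge0$ a loss, and a fixed observed sample $(\mathbf{y}_{[i]},\mathbf{X}_{1[i]},\mathbf{X}_{2[i]})$, $i=1,\dots,n$, $n\ge2$. $\hat e_{\text{orig}}(f)=\frac1n\sum_iL\{f,(\mathbf{y}_{[i]},\mathbf{X}_{1[i]},\mathbf{X}_{2[i]})\}$; $\hat e_{\text{switch}}(f)=\frac1{n(n-1)}\sum_i\sum_{j\ne i}L\{f,(\mathbf{y}_{[j]},\mathbf{X}_{1[i]},\mathbf{X}_{2[j]})\}$. For $\gamma\in\mathbb{R}$, $\hat h_{+,\gamma}(f):=\hat e_{\text{orig}}(f)+\gamma\hat e_{\text{switch}}(f)$. Standing assumptions: $\min_{f\in\mathcal{F}}\hat e_{\text{orig}}(f)>0$ and minimizers of $\hat h_{+,\gamma}$ over $\mathcal{F}$ exist for every $\gamma$. *)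

From mathcomp Require Import all_boot all_order all_algebra.
From mathcomp Require Import reals.
Set Implicit Arguments. Unset Strict Implicit. Unset Printing Implicit Defensive.
Import Order.TTheory GRing.Theory Num.Theory.
Local Open Scope ring_scope.

Section Risks.
Variables (R : realType) (M Y X1 X2 : Type) (n : nat).
Variable L : M -> Y * X1 * X2 -> R.
Variables (y : 'I_n -> Y) (x1 : 'I_n -> X1) (x2 : 'I_n -> X2).

Definition e_orig (f : M) : R :=
  (n%:R)^-1 * \sum_(i < n) L f (y i, x1 i, x2 i).

Definition e_switch (f : M) : R :=
  (n%:R * (n%:R - 1))^-1 *
    \sum_(i < n) \sum_(j < n | j != i) L f (y j, x1 i, x2 j).

Definition h_plus (gamma : R) (f : M) : R := e_orig f + gamma * e_switch f.

End Risks.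

From mathcomp Require Import all_boot all_order all_algebra.
From mathcomp Require Import reals.
From mathcomp Require Import ring lra.
Set Implicit Arguments. Unset Strict Implicit. Unset Printing Implicit Defensive.
Import Order.TTheory GRing.Theory Num.Theory.
Local Open Scope ring_scope.

(* Everything follows from comparing the minimality of [g a] at [b] with that
   of [g b] at [a].  For (3), the line [γ ↦ E (g a) + γ S (g a)] lies above the
   minimal value [V γ] and touches it at [γ = a]; dividing by [γ < 0] turns this
   into [q γ >= (E (g a) / eps - 1) / γ + S (g a) / eps], a hyperbola in [γ]
   whose monotonicity on [γ < 0] is decided by the sign of [E (g a) - eps]. *)

Section RiskNonneg.
Variables (R : realType) (M Y X1 X2 : Type) (n : nat).
Variable L : M -> Y * X1 * X2 -> R.
Variables (y : 'I_n -> Y) (x1 : 'I_n -> X1) (x2 : 'I_n -> X2).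
Hypothesis L_ge0 : forall f z, 0 <= L f z.

Lemma e_orig_ge0 f : 0 <= e_orig L y x1 x2 f.
Proof. by rewrite mulr_ge0 ?invr_ge0 ?ler0n ?sumr_ge0. Qed.

(* No assumption on [n] is needed: for [n <= 1] the normalising factor is [0^-1 = 0]. *)
Lemma e_switch_ge0 f : 0 <= e_switch L y x1 x2 f.
Proof.
have norm_ge0 : 0 <= n%:R * (n%:R - 1) :> R.
  case: n => [|k]; first by rewrite mul0r.
  by rewrite -natr1 addrK mulr_ge0 ?addr_ge0.
by rewrite mulr_ge0 ?invr_ge0 // sumr_ge0 // => i _; rewrite sumr_ge0.
Qed.

End RiskNonneg.

Section HyperbolaBounds.
Variable R : realFieldType.
Implicit Types (eps gamma v e s c : R).

Lemma affine_ratioE eps gamma e s : eps != 0 -> gamma != 0 ->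
  ((e + gamma * s) / eps - 1) / gamma = (e / eps - 1) / gamma + s / eps.
Proof. by move=> eps_neq0 gamma_neq0; field; apply/andP. Qed.

Lemma affine_ratio_le eps gamma v e s : 0 < eps -> gamma < 0 ->
  v <= e + gamma * s -> (e / eps - 1) / gamma + s / eps <= (v / eps - 1) / gamma.
Proof.
move=> eps_gt0 gamma_lt0 v_le.
rewrite -affine_ratioE ?(gt_eqF eps_gt0) ?(lt_eqF gamma_lt0) //.
apply: ler_wnM2r; first by rewrite invr_le0 ltW.
by rewrite lerD2r ler_pM2r ?invr_gt0.
Qed.

Lemma ler_ndivl2 c a b : c <= 0 -> a <= b -> b < 0 -> c / a <= c / b.
Proof.
move=> c_le0 ab b_lt0; have a_lt0 : a < 0 by exact: le_lt_trans b_lt0.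
by rewrite ler_wnM2l // lef_nV2 ?negrE.
Qed.

Lemma ler_pdivl2 c a b : 0 <= c -> a <= b -> b < 0 -> c / b <= c / a.
Proof.
move=> c_ge0 ab b_lt0; have a_lt0 : a < 0 by exact: le_lt_trans b_lt0.
by rewrite ler_wpM2l // lef_nV2 ?negrE.
Qed.

End HyperbolaBounds.

Section PenalizedMinimizers.
Variables (R : realFieldType) (M : Type) (F : M -> Prop) (E S : M -> R).
Variable g : R -> M.
Hypothesis g_in : forall gamma, F (g gamma).
Hypothesis g_min : forall gamma f, F f ->
  E (g gamma) + gamma * S (g gamma) <= E f + gamma * S f.

Local Notation V gamma := (E (g gamma) + gamma * S (g gamma)).
Local Notation q eps gamma := ((V gamma / eps - 1) / gamma).

Lemma min_value_nondecreasing : (forall f, F f -> 0 <= S f) ->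
  forall a b, a <= b -> V a <= V b.
Proof.
move=> S_ge0 a b ab; apply: le_trans (g_min a (g_in b)) _.
by rewrite lerD2l ler_wpM2r ?S_ge0.
Qed.

Lemma min_switch_nonincreasing a b : a <= b -> S (g b) <= S (g a).
Proof.
rewrite le_eqVlt => /predU1P[-> // | ab].
have := g_min a (g_in b); have := g_min b (g_in a).
have : 0 < b - a by rewrite subr_gt0.
nra.
Qed.

Lemma min_orig_nonincreasing a b : a <= b -> b <= 0 -> E (g b) <= E (g a).
Proof.
move=> ab b_le0; have := g_min b (g_in a).
have : b * (S (g a) - S (g b)) <= 0.
  by rewrite mulr_le0_ge0 // subr_ge0 min_switch_nonincreasing.
lra.
Qed.

Lemma min_orig_at0 f : F f -> E (g 0) <= E f.
Proof. by move/(g_min 0); rewrite !mul0r !addr0. Qed.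

Lemma hyperbola_le_min_ratio eps a gamma : 0 < eps -> gamma < 0 ->
  (E (g a) / eps - 1) / gamma + S (g a) / eps <= q eps gamma.
Proof. by move=> eps_gt0 gamma_lt0; apply: affine_ratio_le (g_min _ (g_in a)). Qed.

Lemma min_ratioE eps a : 0 < eps -> a < 0 ->
  q eps a = (E (g a) / eps - 1) / a + S (g a) / eps.
Proof.
by move=> eps_gt0 a_lt0; rewrite affine_ratioE ?(gt_eqF eps_gt0) ?(lt_eqF a_lt0).
Qed.

Lemma min_ratio_nondecreasing eps a b : 0 < eps -> a <= b -> b < 0 ->
  E (g a) <= eps -> q eps a <= q eps b.
Proof.
move=> eps_gt0 ab b_lt0 Ea_le.
have a_lt0 : a < 0 by exact: le_lt_trans b_lt0.
rewrite min_ratioE //; apply: le_trans (hyperbola_le_min_ratio a eps_gt0 b_lt0).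
by rewrite lerD2r ler_ndivl2 // subr_le0 ler_pdivrMr // mul1r.
Qed.

Lemma min_ratio_nonincreasing eps a b : 0 < eps -> a <= b -> b < 0 ->
  eps < E (g b) -> q eps b <= q eps a.
Proof.
move=> eps_gt0 ab b_lt0 Eb_gt.
have a_lt0 : a < 0 by exact: le_lt_trans b_lt0.
rewrite min_ratioE //; apply: le_trans (hyperbola_le_min_ratio b eps_gt0 a_lt0).
by rewrite lerD2r ler_pdivl2 // subr_ge0 ler_pdivlMr // mul1r ltW.
Qed.

End PenalizedMinimizers.

Theorem lemma20 (R : realType) (M Y X1 X2 : Type) (F : M -> Prop)
  (L : M -> Y * X1 * X2 -> R) (n : nat)
  (y : 'I_n -> Y) (x1 : 'I_n -> X1) (x2 : 'I_n -> X2)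
  (emin : R) (g : R -> M) (eps_abs : R) :
  (1 < n)%N ->
  (forall f z, 0 <= L f z) ->
  (* emin = min_{f in F} e_orig(f), attained, and positive *)
  (exists2 f0, F f0 & e_orig L y x1 x2 f0 = emin) ->
  (forall f, F f -> emin <= e_orig L y x1 x2 f) ->
  0 < emin ->
  (* g gamma is (any) minimizer of h_{+,gamma} over F, for every gamma *)
  (forall gamma, F (g gamma) /\
     forall f, F f -> h_plus L y x1 x2 gamma (g gamma) <= h_plus L y x1 x2 gamma f) ->
  0 < eps_abs ->
  let hg := fun gamma => h_plus L y x1 x2 gamma (g gamma) in
  let eg := fun gamma => e_orig L y x1 x2 (g gamma) in
  let q := fun gamma => (hg gamma / eps_abs - 1) * gamma^-1 in
  [/\ (* (1) *)
      (forall g1 g2, g1 <= g2 -> hg g1 <= hg g2),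
      (* (2) *)
      (forall g1 g2, g1 <= g2 -> g2 <= 0 -> eg g2 <= eg g1) /\
      (emin <= eps_abs -> 0 <= hg 0 /\ eg 0 <= eps_abs),
      (* (3) increasing where eg <= eps_abs and gamma < 0 *)
      (forall g1 g2, g1 <= g2 -> g2 < 0 ->
         eg g1 <= eps_abs -> eg g2 <= eps_abs -> q g1 <= q g2)
    & (* (3) decreasing where eg > eps_abs and gamma < 0 *)
      (forall g1 g2, g1 <= g2 -> g2 < 0 ->
         eps_abs < eg g1 -> eps_abs < eg g2 -> q g2 <= q g1)].
Proof.
move=> _ L_ge0 [f0 Ff0 <-] _ _ g_spec eps_gt0 hg eg q.
set E := e_orig L y x1 x2; set S := e_switch L y x1 x2.
have g_in gamma : F (g gamma) := (g_spec gamma).1.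
have g_min gamma f : F f -> E (g gamma) + gamma * S (g gamma) <= E f + gamma * S f.
  exact: (g_spec gamma).2.
split.
- exact: min_value_nondecreasing g_in g_min (fun f _ => e_switch_ge0 y x1 x2 L_ge0 f).
- split; first exact: min_orig_nonincreasing g_in g_min.
  move=> Ef0_le; split; first by rewrite /hg /h_plus mul0r addr0 e_orig_ge0.
  by rewrite /eg (le_trans (min_orig_at0 g_min Ff0)).
- move=> g1 g2 g12 g2_lt0 Eg1_le _.
  exact (min_ratio_nondecreasing g_in g_min eps_gt0 g12 g2_lt0 Eg1_le).
- move=> g1 g2 g12 g2_lt0 _ Eg2_gt.
  exact (min_ratio_nonincreasing g_in g_min eps_gt0 g12 g2_lt0 Eg2_gt).
Qed.
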